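(* Let $n\ge3$. Let $\mathcal M=(G,In,Out,Leak)$ be a linear compartmental model with $n-1$ compartments such that $In=Out=\{1\}$ and $Leak=\emptyset$. Let $H$ be the graph obtained from $G$ by adding a leaf edge at compartment $1$ (new compartment $n$, edges $1\to n$ with parameter $a_{n1}$ and $n\to1$ with parameter $a_{1n}$), and let $\mathcal M'=(H,In',Out',Leak')$ be a linear compartmental model with $Leak'=\emptyset$. Let $A$ and $A^*$ denote the compartmental matrices of $\mathcal M$ and $\mathcal M'$. Then: (1) $\det(\lambda I-A^* )=\lambda\det(\lambda I-A)+a_{1n}\det(\lambda I-A)+a_{n1}\lambda\det\big((\lambda I-A)^{1,1}\big)$; (2) $\det\big((\lambda I-A^* )^{1,n}\big)=(-1)^{n-1}a_{n1}\det\big((\lambda I-A)^{1,1}\big)$; (3) $\det\big((\lambda I-A^* )^{n,1}\big)=(-1)^{n-1}a_{1n}\det\big((\lambda I-A)^{1,1}\big)$.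
   Context: A linear compartmental model $\mathcal M=(G,In,Out,Leak)$ consists of a finite directed graph $G=(V_G,E_G)$ without multi-edges, compartments $V_G=\{1,\dots,m\}$, and subsets $In,Out,Leak\subseteq V_G$; edge $j\to i$ carries parameter $a_{ij}$ and each $i\in Leak$ carries $a_{0i}$. The compartmental matrix $A$ has $A_{ii}=-\sum_{k:\,i\to k\in E_G}a_{ki}$ (minus $a_{0i}$ if $i\in Leak$), $A_{ij}=a_{ij}$ if $j\to i\in E_G$, $0$ otherwise. $B^{i,j}$ denotes $B$ with row $i$ and column $j$ removed; $\lambda$ is an indeterminate. Adding a leaf edge at $i$ to a graph with vertex set $\{1,\dots,n-1\}$ gives the graph with vertex set $\{1,\dots,n\}$ and edge set $E_G\cup\{i\to n,n\to i\}$. *)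

From HB Require Import structures.
From mathcomp Require Import all_boot all_order all_algebra.
Set Implicit Arguments. Unset Strict Implicit. Unset Printing Implicit Defensive.
Import GRing.Theory.
Local Open Scope ring_scope.

(* Compartments {1,...,k} are represented by 'I_k (compartment i+1 <-> index i).
   A directed graph is a relation G : rel 'I_k, with  G x y  meaning the edge x -> y.
   Edge parameters: a i j is the parameter a_{ij} of the edge j -> i;
   leak parameters: a0 i is a_{0i}. *)

Definition comp_mx (R : comRingType) (k : nat) (G : rel 'I_k) (Leak : pred 'I_k)
    (a : 'I_k -> 'I_k -> R) (a0 : 'I_k -> R) : 'M[R]_k :=
  \matrix_(i, j)
    if i == j then - (\sum_(l | G i l) a l i) - (if Leak i then a0 i else 0)
    else if G j i then a i j else 0.

(* Adding a leaf edge at i to a graph on 'I_k: new vertex ord_max (= compartment k+1),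
   old vertex x is embedded as lift ord_max x (same numerical value). *)
Definition add_leaf (k : nat) (G : rel 'I_k) (i : 'I_k) : rel 'I_k.+1 :=
  fun x y =>
    match unlift ord_max x, unlift ord_max y with
    | Some x', Some y' => G x' y'
    | Some x', None => x' == i
    | None, Some y' => y' == i
    | None, None => false
    end.

From HB Require Import structures.
From mathcomp Require Import all_boot all_order all_algebra ring.
Set Implicit Arguments.
Unset Strict Implicit.
Unset Printing Implicit Defensive.
Import GRing.Theory.
Local Open Scope ring_scope.

(* With the new compartment ordered last, lambda I - A* is lambda I - A with
   a_{n1} added to its (1,1) entry (the extra outflow of compartment 1),
   bordered by a last row and column that vanish outside compartment 1.
   Laplace expansion along the border gives
   det (lambda I - A* ) = (lambda + a_{1n}) det (lambda I - A + a_{n1} E_11)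
                          - a_{n1} a_{1n} det ((lambda I - A)^{1,1}),
   and each of the two border minors has a single nonzero term. *)

Lemma lift_max_ord0 n : lift ord_max ord0 = ord0 :> 'I_n.+2.
Proof. by apply: ord_inj; rewrite lift_max. Qed.

Lemma lift_ord0_max n : lift ord0 ord_max = ord_max :> 'I_n.+2.
Proof. by apply: ord_inj. Qed.

Lemma lift_ord0_lift_max n (i : 'I_n) :
  lift ord0 (lift ord_max i) = lift ord_max (lift ord0 i) :> 'I_n.+2.
Proof. by apply: ord_inj; rewrite lift0 !lift_max lift0. Qed.

Section DeltaMx.
Variable R : comRingType.

Lemma row'_col'_add_delta m n (M : 'M[R]_(m, n)) x i j l :
  row' i (col' j (M + x *: delta_mx i l)) = row' i (col' j M).
Proof. by apply/matrixP => r s; rewrite !mxE lift_eqF mulr0 addr0. Qed.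

Lemma det_add_delta n (M : 'M[R]_n) x i :
  \det (M + x *: delta_mx i i) = \det M + x * \det (row' i (col' i M)).
Proof.
rewrite (expand_det_row _ i) [in RHS](expand_det_row _ i).
under eq_bigr do rewrite /cofactor row'_col'_add_delta -/(cofactor M i _) !mxE mulrDl.
rewrite big_split /=; congr (_ + _).
rewrite (bigD1 i) //= big1 ?addr0 => [|j /negbTE ji]; last by rewrite ji andbF mulr0 mul0r.
by rewrite eqxx mulr1 /cofactor -signr_odd oddD addbb mul1r.
Qed.

Lemma char_poly_mx_offdiag n (M : 'M[R]_n) i j :
  i != j -> char_poly_mx M i j = - (M i j)%:P.
Proof. by move=> /negbTE ij; rewrite !mxE ij mulr0n sub0r. Qed.

Lemma char_poly_mx_diag n (M : 'M[R]_n) i :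
  char_poly_mx M i i = 'X - (M i i)%:P.
Proof. by rewrite !mxE eqxx mulr1n. Qed.

Lemma char_poly_mx_sub_delta n (M : 'M[R]_n) x i j :
  char_poly_mx (M - x *: delta_mx i j) = char_poly_mx M + x%:P *: delta_mx i j.
Proof. by apply/matrixP => r s; rewrite !mxE rmorphB rmorphM rmorph_nat; ring. Qed.

End DeltaMx.

Section BorderedDet.
Variables (R : comRingType) (k : nat).

Lemma det_bordered_minor_row0 (M : 'M[R]_k.+2) :
    (forall j : 'I_k.+1, j != ord0 -> M ord_max (lift ord_max j) = 0) ->
  \det (row' ord0 (col' ord_max M)) =
    (-1) ^+ k * M ord_max ord0
      * \det (row' ord0 (col' ord0 (row' ord_max (col' ord_max M)))).
Proof.
move=> last_row; rewrite (expand_det_row _ ord_max) (bigD1 ord0) //=.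
rewrite big1 ?addr0 => [|j j0]; last by rewrite !mxE lift_ord0_max last_row ?mul0r.
rewrite /cofactor addn0.
have -> : row' ord_max (col' ord0 (row' ord0 (col' ord_max M)))
          = row' ord0 (col' ord0 (row' ord_max (col' ord_max M))).
  by apply/matrixP => r s; rewrite !mxE lift_ord0_lift_max.
by rewrite !mxE lift_ord0_max lift_max_ord0 mulrA [_ * _ ^+ _]mulrC.
Qed.

Lemma det_bordered_minor_col0 (M : 'M[R]_k.+2) :
    (forall i : 'I_k.+1, i != ord0 -> M (lift ord_max i) ord_max = 0) ->
  \det (row' ord_max (col' ord0 M)) =
    (-1) ^+ k * M ord0 ord_max
      * \det (row' ord0 (col' ord0 (row' ord_max (col' ord_max M)))).
Proof.
move=> last_col; rewrite -det_tr tr_row' tr_col'.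
have -> : col' ord_max (row' ord0 M^T) = row' ord0 (col' ord_max M^T).
  by apply/matrixP => r s; rewrite !mxE.
rewrite det_bordered_minor_row0 => [|j j0]; last by rewrite mxE last_col.
rewrite mxE -det_tr; congr (_ * \det _).
by apply/matrixP => r s; rewrite !mxE.
Qed.

Lemma det_bordered (M : 'M[R]_k.+2) :
    (forall j : 'I_k.+1, j != ord0 -> M ord_max (lift ord_max j) = 0) ->
    (forall i : 'I_k.+1, i != ord0 -> M (lift ord_max i) ord_max = 0) ->
  \det M = M ord_max ord_max * \det (row' ord_max (col' ord_max M))
    - M ord_max ord0 * M ord0 ord_max
      * \det (row' ord0 (col' ord0 (row' ord_max (col' ord_max M)))).
Proof.
move=> last_row last_col.
rewrite (expand_det_row _ ord_max) (bigD1_ord ord_max) //= (bigD1 ord0) //=.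
rewrite big1 ?addr0 => [|j j0]; last by rewrite last_row ?mul0r.
rewrite lift_max_ord0 {1}/cofactor -signr_odd oddD addbb mul1r.
rewrite /cofactor det_bordered_minor_col0 // addn0 exprS.
by rewrite mulN1r mulNr -!mulrA signrMK; ring.
Qed.

End BorderedDet.

Section LeafModel.
Variables (R : comRingType) (k : nat) (G : rel 'I_k) (i : 'I_k).
Variables (a : 'I_k.+1 -> 'I_k.+1 -> R) (a0 : 'I_k.+1 -> R).

Let A := comp_mx G pred0 (fun x y => a (lift ord_max x) (lift ord_max y))
                 (fun x => a0 (lift ord_max x)).
Let As := comp_mx (add_leaf G i) pred0 a a0.

Lemma add_leaf_lift x y : add_leaf G i (lift ord_max x) (lift ord_max y) = G x y.
Proof. by rewrite /add_leaf !liftK. Qed.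

Lemma add_leaf_to_leaf x : add_leaf G i (lift ord_max x) ord_max = (x == i).
Proof. by rewrite /add_leaf liftK unlift_none. Qed.

Lemma add_leaf_from_leaf y : add_leaf G i ord_max (lift ord_max y) = (y == i).
Proof. by rewrite /add_leaf liftK unlift_none. Qed.

Lemma comp_mx_add_leaf_minor :
  row' ord_max (col' ord_max As) = A - a ord_max (lift ord_max i) *: delta_mx i i.
Proof.
apply/matrixP => x y; rewrite !mxE (inj_eq (@lift_inj _ _)) add_leaf_lift.
case: eqVneq => [<-|xy]; last first.
  have -> : (x == i) && (y == i) = false.
    by apply: contraNF xy => /andP[/eqP -> /eqP ->].
  by rewrite mulr0 subr0.
rewrite andbb big_mkcond (bigD1_ord ord_max) //= add_leaf_to_leaf [in RHS]big_mkcond.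
under eq_bigr do rewrite add_leaf_lift.
by case: eqVneq => [->|_]; rewrite ?mulr1 ?mulr0; ring.
Qed.

Lemma comp_mx_add_leaf_row y :
  As ord_max (lift ord_max y) = if y == i then a ord_max (lift ord_max i) else 0.
Proof. by rewrite mxE eq_liftF add_leaf_to_leaf; case: eqVneq => [->|]. Qed.

Lemma comp_mx_add_leaf_col x :
  As (lift ord_max x) ord_max = if x == i then a (lift ord_max i) ord_max else 0.
Proof. by rewrite mxE lift_eqF add_leaf_from_leaf; case: eqVneq => [->|]. Qed.

Lemma comp_mx_add_leaf_corner : As ord_max ord_max = - a (lift ord_max i) ord_max.
Proof.
rewrite mxE eqxx big_mkcond (bigD1_ord ord_max) //=.
under eq_bigr do rewrite add_leaf_from_leaf.
by rewrite -big_mkcond big_pred1_eq /add_leaf unlift_none add0r subr0.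
Qed.

End LeafModel.

Theorem lemma4p13 (R : comRingType) (m : nat)
  (G : rel 'I_m.+2) (In Out : {set 'I_m.+2})
  (hIn : In = [set ord0]) (hOut : Out = [set ord0])
  (In' Out' : {set 'I_m.+3})
  (a : 'I_m.+3 -> 'I_m.+3 -> R) (a0 : 'I_m.+3 -> R) :
  let H := add_leaf G ord0 in
  let A := comp_mx G pred0 (fun i j => a (lift ord_max i) (lift ord_max j))
                   (fun i => a0 (lift ord_max i)) in
  let As := comp_mx H pred0 a a0 in
  [/\ \det (char_poly_mx As) =
        'X * \det (char_poly_mx A) + (a ord0 ord_max)%:P * \det (char_poly_mx A)
        + (a ord_max ord0)%:P * 'X * \det (row' ord0 (col' ord0 (char_poly_mx A))),
      \det (row' ord0 (col' ord_max (char_poly_mx As))) =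
        (-1) ^+ (m.+3 - 1) * (a ord_max ord0)%:P
          * \det (row' ord0 (col' ord0 (char_poly_mx A)))
    & \det (row' ord_max (col' ord0 (char_poly_mx As))) =
        (-1) ^+ (m.+3 - 1) * (a ord0 ord_max)%:P
          * \det (row' ord0 (col' ord0 (char_poly_mx A)))].
Proof.
move=> H A As; set Q := char_poly_mx As.
have Q_minor : row' ord_max (col' ord_max Q)
               = char_poly_mx A + (a ord_max ord0)%:P *: delta_mx ord0 ord0.
  by rewrite row'_col'_char_poly_mx comp_mx_add_leaf_minor char_poly_mx_sub_delta lift_max_ord0.
have Q_core : row' ord0 (col' ord0 (row' ord_max (col' ord_max Q)))
              = row' ord0 (col' ord0 (char_poly_mx A)).
  by rewrite Q_minor row'_col'_add_delta.
have Q_row y : y != ord0 -> Q ord_max (lift ord_max y) = 0.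
  by move=> /negbTE y0; rewrite char_poly_mx_offdiag ?neq_lift // comp_mx_add_leaf_row y0 oppr0.
have Q_col x : x != ord0 -> Q (lift ord_max x) ord_max = 0.
  by move=> /negbTE x0; rewrite char_poly_mx_offdiag ?lift_eqF // comp_mx_add_leaf_col x0 oppr0.
have Q_row0 : Q ord_max ord0 = - (a ord_max ord0)%:P.
  rewrite -[X in Q _ X]lift_max_ord0 char_poly_mx_offdiag ?neq_lift //.
  by rewrite comp_mx_add_leaf_row eqxx lift_max_ord0.
have Q_col0 : Q ord0 ord_max = - (a ord0 ord_max)%:P.
  rewrite -[X in Q X _]lift_max_ord0 char_poly_mx_offdiag ?lift_eqF //.
  by rewrite comp_mx_add_leaf_col eqxx lift_max_ord0.
have Q_corner : Q ord_max ord_max = 'X + (a ord0 ord_max)%:P.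
  by rewrite char_poly_mx_diag comp_mx_add_leaf_corner lift_max_ord0 polyCN opprK.
rewrite subSS subn0; split.
- rewrite (det_bordered Q_row Q_col) Q_core Q_minor det_add_delta Q_corner Q_row0 Q_col0.
  ring.
- by rewrite (det_bordered_minor_row0 Q_row) Q_core Q_row0 !exprS; ring.
- by rewrite (det_bordered_minor_col0 Q_col) Q_core Q_col0 !exprS; ring.
Qed.
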